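(* Let $G$, $k\ge 3$, the choice strings $c_{i,j}$, $L=k+1$ and $d=k-2$ be as in the construction in the context, and let $s$ be a string of length $L$ such that every choice string $c_{i,j}$ ($1\le i<j\le k$) has a substring of length $L$ at Hamming distance at most $d$ from $s$. Then each of the first $k$ positions of $s$ holds an encoding symbol and the last position of $s$ holds the synchronizing symbol $\#$.
   Context: Let $G=(V,E)$ be an undirected simple graph with $V=\{v_1,\dots,v_n\}$ and edge set $E=\{e_1,\dots,e_m\}$, and let $k\ge 3$ be an integer; put $N=\binom{k}{2}$. The alphabet consists of pairwise distinct symbols: encoding symbols $\sigma_1,\dots,\sigma_n$, string identification symbols $\varphi_1,\dots,\varphi_N$, and a synchronizing symbol $\#$. Order the pairs $(i,j)$ with $1\le i<j\le k$ lexicographically, $(1,2),(1,3),\dots,(1,k),(2,3),\dots,(k-1,k)$, and let $i'$ denote the position of $(i,j)$ in this order. For an edge $e$ joining $v_r$ and $v_s$ with $r<s$ define $\mathrm{block}(i,j,e)=\varphi_{i'}^{\,i-1}\,\sigma_r\,\varphi_{i'}^{\,j-i-1}\,\sigma_s\,\varphi_{i'}^{\,k-j}\,\#$ (a string of length $k+1$), and the choice string $c_{i,j}=\mathrm{block}(i,j,e_1)\,\varphi_{i'}^{\,k}\,\mathrm{block}(i,j,e_2)\,\varphi_{i'}^{\,k}\cdots\varphi_{i'}^{\,k}\,\mathrm{block}(i,j,e_m)$. Set $L=k+1$ and $d=k-2$. *)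

From HB Require Import structures.
From mathcomp Require Import all_boot.
Set Implicit Arguments. Unset Strict Implicit. Unset Printing Implicit Defensive.

(* Alphabet for a graph on n vertices:
   Enc r   = encoding symbol sigma_{r+1}   (r : 'I_n, vertex v_{r+1})
   Phi p   = string identification symbol phi_p  (p meant to be in 1..N)
   Hash    = synchronizing symbol #
   Constructors are pairwise distinct, so all symbols are pairwise distinct. *)
Inductive Sym (n : nat) : Type :=
| Enc of 'I_n
| Phi of nat
| Hash.
Arguments Hash {n}.

Definition sym_eqb n (x y : Sym n) : bool :=
  match x, y with
  | Enc a, Enc b => a == b
  | Phi p, Phi q => p == q
  | Hash, Hash => true
  | _, _ => false
  end.

Lemma sym_eqP n : Equality.axiom (@sym_eqb n).
Proof.
move=> [a|p|] [b|q|] /=; try by constructor.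
- by apply: (iffP eqP) => [->|[]].
- by apply: (iffP eqP) => [->|[]].
Qed.

HB.instance Definition _ n := hasDecEq.Build (Sym n) (@sym_eqP n).

Definition in_alphabet n k (x : Sym n) : bool :=
  match x with
  | Phi p => (1 <= p <= 'C(k, 2))%N
  | _ => true
  end.

Definition is_enc n (x : Sym n) : bool :=
  if x is Enc _ then true else false.

(* position i' (1-based) of the pair (i,j), 1 <= i < j <= k, in the
   lexicographic order (1,2),(1,3),...,(1,k),(2,3),...,(k-1,k) *)
Definition pair_index (k i j : nat) : nat :=
  (\sum_(1 <= t < i) (k - t) + (j - i))%N.

Definition block n (k i j : nat) (e : 'I_n * 'I_n) : seq (Sym n) :=
  let ph := Phi n (pair_index k i j) in
  nseq (i - 1) ph ++ [:: Enc e.1] ++ nseq (j - i - 1) ph ++ [:: Enc e.2]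
    ++ nseq (k - j) ph ++ [:: Hash].

Definition choice_string n (k : nat) (E : seq ('I_n * 'I_n)) (i j : nat)
  : seq (Sym n) :=
  match E with
  | [::] => [::]
  | e1 :: rest =>
      block k i j e1 ++
      flatten [seq nseq k (Phi n (pair_index k i j)) ++ block k i j e | e <- rest]
  end.

(* Hamming distance of two strings (used for equal lengths) *)
Definition hamming n (s t : seq (Sym n)) : nat :=
  count (fun xy : Sym n * Sym n => xy.1 != xy.2) (zip s t).

Definition substring n (t c : seq (Sym n)) : Prop :=
  exists u w, c = u ++ t ++ w.

Definition simple_edge_list n (E : seq ('I_n * 'I_n)) : Prop :=
  uniq E /\ all (fun e : 'I_n * 'I_n => (e.1 < e.2)%N) E.

(* A window t of length k+1 of the choice string c_{i,j} lies inside
   phi^k block(i,j,e) phi^k for an edge e.  Hence t shows only phi_{i'} and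
   the three non-phi symbols of block(i,j,e), and it contains all three only
   if it starts at one of the first i symbols of block(i,j,e).  As s agrees
   with t in at least three places, phi_{i'} and the non-phi symbols occur at
   least three times in s altogether; and if phi_{i'} does not occur in s,
   then s agrees with t exactly at those three symbols, so s holds # at a
   position k - o and encoding symbols at i - 1 - o and j - 1 - o, with o < i.
   The 2k - 3 symbols phi_{i'} of the pairs (1,j) and (2,j) compete for the
   phi-positions of s.  If every phi_{(1,j)} occurred, s would have at most
   two non-phi symbols, leaving too few phi-positions for all of them; so
   some phi_{(1,j)} is absent, whence s ends in # and starts with an encoding
   symbol.  Then each position q in 1..k-1 without an encoding symbol forces
   phi_{(1,q+1)} into s, which uses up all phi-positions: no phi_{(2,j)}
   occurs, no # lies inside, and the pairs (2,j) put encoding symbols at all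
   positions 1..k-1. *)

From mathcomp Require Import all_boot zify.
Set Implicit Arguments. Unset Strict Implicit. Unset Printing Implicit Defensive.

Section Infix.
Variable T : eqType.
Implicit Types t u w x y : seq T.

Lemma infix_cat_prefix t u w x y :
  x ++ y = u ++ t ++ w -> size u + size t <= size x -> infix t x.
Proof.
move=> Exy le_ut; set m := size u + size t.
have: take m x ++ (drop m x ++ y) = (u ++ t) ++ w by rewrite catA cat_take_drop Exy catA.
move/eqP; rewrite eqseq_cat ?size_takel ?size_cat // => /andP[/eqP ut_x _].
by rewrite -(cat_take_drop m x) ut_x -catA infix_infix.
Qed.

Lemma infix_cat_suffix t u w x y :
  x ++ y = u ++ t ++ w -> size x <= size u -> infix t y.
Proof.
move=> Exy le_xu; rewrite -(cat_take_drop (size x) u) -catA in Exy.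
move/eqP: Exy; rewrite eqseq_cat ?size_takel // => /andP[_ /eqP ->].
exact: infix_infix.
Qed.

Lemma infix_cat_window t x y :
  infix t (x ++ y) -> infix t (x ++ take (size t).-1 y) \/ infix t y.
Proof.
case/infixP=> u [w Exy]; have size_xy := congr1 size Exy.
rewrite !size_cat in size_xy.
have [lt_ux | le_xu] := ltnP (size u) (size x); last first.
  by right; exact: infix_cat_suffix Exy le_xu.
left; apply: (@infix_cat_prefix _ u w _ (drop (size t).-1 y)).
  by rewrite -catA cat_take_drop.
rewrite size_cat size_take_min; lia.
Qed.

End Infix.

Lemma nth_nseq_cons (T : Type) (x0 y z : T) a w r :
  nth x0 (nseq a y ++ z :: w) r =
  if r < a then y else if r == a then z else nth x0 w (r - a.+1).
Proof.
rewrite nth_cat size_nseq nth_nseq.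
by case: (ltngtP r a) => [// | lt_ar | ->]; [rewrite -subnSK | rewrite subnn].
Qed.

Section PaddedBlock.
Variables (n k i j : nat).
Hypotheses (i_gt0 : 0 < i) (lt_ij : i < j) (le_jk : j <= k).
Local Notation ph := (Phi n (pair_index k i j)).
Implicit Type e : 'I_n * 'I_n.

Definition padded_block (e : 'I_n * 'I_n) : seq (Sym n) :=
  nseq k ph ++ block k i j e ++ nseq k ph.

Lemma size_block e : size (block k i j e) = k.+1.
Proof. rewrite /block !size_cat !size_nseq /=; lia. Qed.

Lemma padded_blockE e :
  padded_block e = nseq (k + i - 1) ph ++ Enc e.1 :: nseq (j - i - 1) ph ++
                   Enc e.2 :: nseq (k - j) ph ++ Hash :: nseq k ph.
Proof. by rewrite /padded_block /block -addnBA // nseqD -!catA. Qed.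

Lemma size_padded_block e : size (padded_block e) = k + k + k.+1.
Proof. rewrite /padded_block /block !size_cat !size_nseq /=; lia. Qed.

Lemma nth_padded_block e r : r <= k + k + k ->
  nth Hash (padded_block e) r =
  if r == k + i - 1 then Enc e.1 else if r == k + j - 1 then Enc e.2
  else if r == k + k then Hash else ph.
Proof.
move=> le_r; rewrite padded_blockE !nth_nseq_cons nth_nseq.
by do ![case: ifP => ? //]; lia.
Qed.

Lemma choice_window_in_padded_block E t :
  infix t (choice_string k E i j) -> size t = k.+1 -> exists e, infix t (padded_block e).
Proof.
rewrite /choice_string => + size_t; case: E => [|e rest].
  by rewrite infixs0 => /eqP t0; rewrite t0 in size_t.
elim: rest e => [|e' rest IHrest] e /=.
  by rewrite cats0 => t_e; exists e; apply/infix_catl/infix_catr.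
rewrite -catA => /infix_cat_window[|].
  by rewrite size_t take_size_cat ?size_nseq // => t_e; exists e; apply: infix_catl.
case/infix_cat_window; last exact: IHrest.
rewrite size_t takel_cat ?size_block // => t_e'; exists e'; apply: (infix_trans t_e').
rewrite /padded_block catA; apply: infix_catr.
by rewrite -[in X in infix _ X](cat_take_drop k (block k i j e')) catA prefix_infix.
Qed.

End PaddedBlock.

Lemma count_nth_iota (T : Type) (x0 : T) (a : pred T) s :
  count a s = count (fun q => a (nth x0 s q)) (iota 0 (size s)).
Proof. by rewrite -{1}(mkseq_nth x0 s) /mkseq count_map. Qed.

Definition is_phi n (x : Sym n) : bool := if x is Phi _ then true else false.

Section Hamming.
Variable n : nat.
Implicit Types s t : seq (Sym n).

Lemma hamming_nth s t : size s = size t ->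
  hamming s t = count (fun q => nth Hash s q != nth Hash t q) (iota 0 (size s)).
Proof.
move=> eq_st; rewrite /hamming (count_nth_iota (Hash, Hash)) size_zip -eq_st minnn.
by apply: eq_count => q; rewrite /= nth_zip.
Qed.

Lemma three_agreements m s t : size s = m.+1 -> size t = m.+1 -> hamming s t <= m - 2 ->
  1 < m -> 3 <= count (fun q => nth Hash s q == nth Hash t q) (iota 0 m.+1).
Proof.
move=> size_s size_t; rewrite hamming_nth ?size_s ?size_t // => close_st m_gt1.
have := count_predC (fun q => nth Hash s q == nth Hash t q) (iota 0 m.+1).
rewrite size_iota (eq_count (a1 := predC _) (a2 := fun q => nth Hash s q != nth Hash t q)) //.
lia.
Qed.

End Hamming.

Section Windows.
Variables (n k i j : nat).
Hypotheses (i_gt0 : 0 < i) (lt_ij : i < j) (le_jk : j <= k) (k_gt1 : 1 < k).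
Variables (e : 'I_n * 'I_n) (s t : seq (Sym n)).
Hypotheses (size_s : size s = k.+1) (size_t : size t = k.+1).
Hypotheses (t_window : infix t (padded_block k i j e)) (close_st : hamming s t <= k - 2).
Local Notation ph := (Phi n (pair_index k i j)).

Lemma pair_count_lower : 3 <= count_mem ph s + count (predC (@is_phi n)) s.
Proof.
pose allowed := predU (pred1 ph) (predC (@is_phi n)).
have allowed_t q : allowed (nth Hash t q).
  have [lt_qt | le_tq] := ltnP q (size t); last by rewrite nth_default.
  have: all allowed (padded_block k i j e).
    by rewrite /padded_block /block !all_cat !all_nseq /= eqxx !orbT.
  by move/allP; apply; apply: (mem_infix t_window); apply: mem_nth.
apply: leq_trans (three_agreements size_s size_t close_st k_gt1) _.
apply: (@leq_trans (count allowed s)); last by rewrite -count_predUI leq_addr.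
rewrite (count_nth_iota Hash) size_s; apply: sub_count => q /= /eqP ->.
exact: allowed_t.
Qed.

Lemma pair_symbol_absent_aligned : ph \notin s ->
  exists2 o, o < i & [/\ nth Hash s (k - o) = Hash,
    is_enc (nth Hash s (i - 1 - o)) & is_enc (nth Hash s (j - 1 - o))].
Proof.
move=> ph_notin_s; case/infixP: t_window => u [w padded_eq].
set x := padded_block k i j e in padded_eq; set o := size u.
have size_x : o + k.+1 <= k + k + k.+1.
  rewrite -(size_padded_block i_gt0 lt_ij le_jk e) -/x padded_eq !size_cat size_t.
  by rewrite leq_add2l leq_addr.
have nth_t q : q < k.+1 -> nth Hash t q = nth Hash x (o + q).
  by move=> lt_q; rewrite padded_eq nth_cat ltnNge leq_addr addKn /= nth_cat size_t lt_q.
set N := [seq r <- iota o k.+1 | nth Hash s (r - o) == nth Hash x r].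
have size_N : 3 <= size N.
  rewrite size_filter -[in iota o _](addn0 o) iotaDl count_map.
  rewrite (eq_in_count (a2 := fun q => nth Hash s q == nth Hash t q)).
    exact: three_agreements.
  by move=> q; rewrite mem_iota /= addKn => lt_q; rewrite nth_t.
(* [s] can agree with the window only on non-phi symbols, and the only ones
   in [x] are the three of [block e]. *)
set pos := [:: k + i - 1; k + j - 1; k + k].
have N_sub : {subset N <= pos}.
  move=> r; rewrite mem_filter mem_iota => /andP[/eqP agree_r /andP[_ lt_r]].
  have: nth Hash x r != ph.
    rewrite -agree_r; apply: contraNneq ph_notin_s => <-.
    by apply: mem_nth; rewrite size_s; lia.
  rewrite /x nth_padded_block //; last by lia.
  by rewrite !inE; do ![case: eqP => //]; rewrite eqxx.
have [_ mem_N] := uniq_min_size (filter_uniq _ (iota_uniq _ _)) N_sub size_N.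
have in_N r : r \in pos ->
    o <= r < o + k.+1 /\ nth Hash s (r - o) = nth Hash x r.
  by rewrite -mem_N mem_filter mem_iota => /andP[/eqP -> ->].
have /in_N[/andP[le_oA _] sA] : k + i - 1 \in pos by rewrite inE eqxx.
have /in_N[_ sB] : k + j - 1 \in pos by rewrite !inE eqxx orbT.
have /in_N[/andP[_ lt_C] sC] : k + k \in pos by rewrite !inE eqxx !orbT.
exists (o - k); first lia.
have -> : k - (o - k) = k + k - o by lia.
have -> : i - 1 - (o - k) = k + i - 1 - o by lia.
have -> : j - 1 - (o - k) = k + j - 1 - o by lia.
rewrite sA sB sC /x !nth_padded_block ?eqxx; try lia.
split=> //; first by do 2?[case: eqP => [?|_]; first lia].
by case: eqP.
Qed.

End Windows.

Lemma count_sum (T : Type) (a : pred T) r : count a r = \sum_(x <- r) a x.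
Proof. by rewrite -sum1_count big_mkcond; apply: eq_bigr => x _; case: (a x). Qed.

Lemma count_sum_nth (T : Type) (x0 : T) (a : pred T) s :
  count a s = \sum_(0 <= q < size s) a (nth x0 s q).
Proof. by rewrite (count_nth_iota x0) count_sum /index_iota subn0. Qed.

Lemma sum_count_mem (T : eqType) (S s : seq T) :
  uniq S -> \sum_(x <- S) count_mem x s = count (mem S) s.
Proof.
move=> uniq_S; elim: s => [|y s IHs] /=; first by rewrite big1.
rewrite big_split /= IHs -count_uniq_mem //; congr (_ + _).
by rewrite count_sum; apply: eq_bigr => x _; rewrite eq_sym.
Qed.

Lemma leq_sum_nat m N (F G : nat -> nat) :
  (forall p, m <= p < N -> F p <= G p) ->
  \sum_(m <= p < N) F p <= \sum_(m <= p < N) G p.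
Proof.
move=> leFG; rewrite big_nat_cond [leqRHS]big_nat_cond.
by apply: leq_sum => p /andP[/leFG].
Qed.

Lemma sum_nat_eq0_nat m N (F : nat -> nat) :
  \sum_(m <= p < N) F p = 0 -> forall p, m <= p < N -> F p = 0.
Proof.
move=> /eqP; rewrite sum_nat_seq_eq0 => /allP F0 p p_range.
by apply/eqP/F0; rewrite mem_index_iota.
Qed.

Lemma pair_index1 k j : pair_index k 1 j = j - 1.
Proof. by rewrite /pair_index big_geq. Qed.

Lemma pair_index2 k j : pair_index k 2 j = k - 1 + (j - 2).
Proof. by rewrite /pair_index big_nat1. Qed.

Section Counting.
Variables (n k : nat) (s : seq (Sym n)).
Hypotheses (k_gt2 : 2 < k) (size_s : size s = k.+1).
Local Notation cnt p := (count_mem (Phi n p) s).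
Local Notation non_phi := (count (predC (@is_phi n)) s).
Hypothesis pair_lower : forall i j, 0 < i -> i < j -> j <= k ->
  3 <= cnt (pair_index k i j) + non_phi.
Hypothesis pair_aligned : forall i j, 0 < i -> i < j -> j <= k ->
  Phi n (pair_index k i j) \notin s ->
  exists2 o, o < i & [/\ nth Hash s (k - o) = Hash,
    is_enc (nth Hash s (i - 1 - o)) & is_enc (nth Hash s (j - 1 - o))].

Lemma sum_pair_counts_le : \sum_(1 <= p < k + k - 2) cnt p <= count (@is_phi n) s.
Proof.
have Phi_inj : injective (Phi n) by move=> p q [].
rewrite -(big_map (Phi n) xpredT (fun x => count_mem x s)).
rewrite sum_count_mem ?map_inj_uniq ?iota_uniq //.
by apply: sub_count => x /mapP[p _ ->].
Qed.

Lemma pair_count_lower_index p : 0 < p < k + k - 2 -> 3 <= cnt p + non_phi.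
Proof.
case/andP=> p_gt0 p_lt; have [lt_pk | le_kp] := ltnP p k.
  by have := pair_lower (j := p.+1) (isT : 0 < 1) p_gt0 lt_pk; rewrite pair_index1 subn1.
have := pair_lower (i := 2) (j := p - k + 3) isT.
rewrite pair_index2 (_ : k - 1 + (p - k + 3 - 2) = p); lia.
Qed.

Lemma first_row_symbol_absent : exists2 p, 0 < p < k & Phi n p \notin s.
Proof.
have [/hasP[p] | /hasPn all_in] :=
  boolP (has (fun p => Phi n p \notin s) (index_iota 1 k)).
  by rewrite mem_index_iota; exists p.
have row1 : k - 1 <= \sum_(1 <= p < k) cnt p.
  rewrite -[k - 1]muln1 -sum_nat_const_nat; apply: leq_sum_nat => p p_range.
  by rewrite -has_count has_pred1 -[_ \in _]negbK all_in ?mem_index_iota.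
have rows : \sum_(1 <= p < k) cnt p <= count (@is_phi n) s.
  apply: leq_trans _ sum_pair_counts_le.
  by rewrite [leqRHS](big_cat_nat (n := k)) ?leq_addr //; lia.
have all_lower : \sum_(1 <= p < k + k - 2) (3 - non_phi) <= count (@is_phi n) s.
  apply: leq_trans _ sum_pair_counts_le; apply: leq_sum_nat => p /pair_count_lower_index; lia.
have total := count_predC (@is_phi n) s; rewrite size_s sum_nat_const_nat in total all_lower.
exfalso; move: all_lower total row1 rows; case: non_phi => [|[|[|x]]]; lia.
Qed.

Lemma encodings_then_hash :
  (forall p, p < k -> is_enc (nth Hash s p)) /\ nth Hash s k = Hash.
Proof.
have row1 q : 0 < q < k -> Phi n q \notin s ->
    [/\ nth Hash s k = Hash, is_enc (nth Hash s 0) & is_enc (nth Hash s q)].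
  case/andP=> q_gt0 q_lt absent.
  have := pair_aligned (j := q.+1) (isT : 0 < 1) q_gt0 q_lt.
  rewrite pair_index1 subn1 => /(_ absent)[o]; rewrite ltnS leqn0 => /eqP ->.
  by rewrite !subn0.
have [p0 p0_range absent0] := first_row_symbol_absent.
have [s_k s_0 _] := row1 p0 p0_range absent0.
have enc_or_cnt q : 0 < q < k -> ~~ is_enc (nth Hash s q) <= cnt q.
  move=> q_range; case: (boolP (is_enc _)) => //= not_enc.
  rewrite lt0n; apply: contra not_enc => /eqP/count_memPn absent.
  by have [] := row1 q q_range absent.
have phi_inner : count (@is_phi n) s = \sum_(1 <= q < k) is_phi (nth Hash s q).
  rewrite (count_sum_nth Hash) size_s big_ltn // big_nat_recr //=; last lia.
  by rewrite s_k addn0; case: (nth Hash s 0) s_0.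
have hash_and_row2 : \sum_(1 <= q < k) (nth Hash s q == Hash) +
                     \sum_(k <= p < k + k - 2) cnt p = 0.
  have := sum_pair_counts_le; rewrite (big_cat_nat (n := k)) //=; try lia.
  have := leq_sum_nat enc_or_cnt; rewrite phi_inner.
  rewrite (eq_bigr (fun q => is_phi (nth Hash s q) + (nth Hash s q == Hash))); last first.
    by move=> q _; case: (nth Hash s q).
  rewrite big_split /=; lia.
move/eqP: hash_and_row2; rewrite addn_eq0 => /andP[/eqP hash0 /eqP row2_0].
have s_km1 : nth Hash s (k - 1) != Hash.
  by apply/eqP => hash; have := sum_nat_eq0_nat hash0 (p := k - 1); rewrite hash eqxx; lia.
have row2 q : 1 < q < k -> is_enc (nth Hash s 1) /\ is_enc (nth Hash s q).
  case/andP=> q_gt1 q_lt.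
  have absent : Phi n (pair_index k 2 q.+1) \notin s.
    by apply/count_memPn; rewrite pair_index2; apply: (sum_nat_eq0_nat row2_0); lia.
  have [[|[|o]] // _ [s_ko enc1 encq]] :=
    pair_aligned (i := 2) (j := q.+1) isT q_gt1 q_lt absent.
    by rewrite subn0 subn1 in encq.
  by rewrite s_ko in s_km1.
split=> // -[|[|p]] p_lt //; first by have [] := row2 2 k_gt2.
by have [] := row2 p.+2 p_lt.
Qed.

End Counting.

Theorem lemma2 (n k : nat) (E : seq ('I_n * 'I_n)) (s : seq (Sym n)) :
  simple_edge_list E ->
  (3 <= k)%N ->
  all (in_alphabet k) s ->
  size s = k.+1 ->
  (forall i j : nat, (1 <= i)%N -> (i < j)%N -> (j <= k)%N ->
     exists t : seq (Sym n),
       substring t (choice_string k E i j) /\ size t = k.+1 /\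
       (hamming s t <= k - 2)%N) ->
  (forall p : nat, (p < k)%N -> is_enc (nth Hash s p)) /\ nth Hash s k = Hash.
Proof.
move=> _ k_gt2 _ size_s windows; have k_gt1 := ltnW k_gt2.
have padded_window i j : 0 < i -> i < j -> j <= k -> exists e t,
    [/\ size t = k.+1, infix t (padded_block k i j e) & hamming s t <= k - 2].
  move=> i_gt0 lt_ij le_jk.
  have [t [/infixP t_sub [size_t close]]] := windows i j i_gt0 lt_ij le_jk.
  have [e t_e] := choice_window_in_padded_block i_gt0 lt_ij le_jk t_sub size_t.
  by exists e, t.
apply: (encodings_then_hash k_gt2 size_s) => i j i_gt0 lt_ij le_jk.
  have [e [t [size_t t_e close]]] := padded_window i j i_gt0 lt_ij le_jk.
  exact: (pair_count_lower k_gt1 size_s size_t t_e close).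
have [e [t [size_t t_e close]]] := padded_window i j i_gt0 lt_ij le_jk.
exact: (pair_symbol_absent_aligned i_gt0 lt_ij le_jk k_gt1 size_s size_t t_e close).
Qed.
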